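(* Let $E$ be a Banach lattice with an order continuous norm, let $\mathfrak{B}$ be a Boolean subalgebra of $\mathfrak{B}(E)$, and let $S\colon\mathfrak{B}\to\mathfrak{B}$ be a sectionally open transformation with $S(\mathbf 0)=\mathbf 0$. If $\xi$ is a forward filtration in $\mathfrak{B}$, then $n\mapsto S(\xi_n)$, $n\in\{0,1,\dots,\infty\}$, is a forward filtration in $\mathfrak{B}$. In particular, the semigroup of sectionally open transformations fixing $\mathbf 0$ acts on the set of forward filtrations in $\mathfrak{B}$ by coordinatewise evaluation.
   Context: $\mathfrak{B}(E)$ is the Boolean algebra of all order projections on $E$ ($\pi\le\rho$ iff $\pi\rho=\pi$, zero $\mathbf 0$, unit $\mathbf 1=I_E$). For $\pi\in\mathfrak{B}$ let $\mathrm{Sc}(\pi)=\{\pi'\in\mathfrak{B}:\pi\le\pi'\}$; a map $S\colon\mathfrak{B}\to\mathfrak{B}$ is sectionally open if $S(\mathrm{Sc}(\pi))=\mathrm{Sc}(S(\pi))$ for all $\pi\in\mathfrak{B}$. A forward filtration in $\mathfrak{B}$ is a map $\xi\colon\{0,1,\dots,\infty\}\to\mathfrak{B}$ with $\xi_n\le\xi_{n+1}$ for all $n\ge0$, $\xi_0=\mathbf 0$, $\xi_\infty=\mathbf 1$. *)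

From HB Require Import structures.
From mathcomp Require Import all_boot all_order all_algebra.
From mathcomp Require Import all_classical all_reals all_analysis.
Set Implicit Arguments. Unset Strict Implicit. Unset Printing Implicit Defensive.
Import Order.TTheory GRing.Theory Num.Theory.
Import numFieldNormedType.Exports.
Local Open Scope classical_set_scope.
Local Open Scope ring_scope.

Section BanachLattice.
Context {R : realType} {E : completeNormedModType R}.
Variable le : E -> E -> Prop.

Definition is_sup2 (x y s : E) : Prop :=
  le x s /\ le y s /\ (forall z, le x z -> le y z -> le s z).
Definition is_inf2 (x y s : E) : Prop :=
  le s x /\ le s y /\ (forall z, le z x -> le z y -> le z s).

(* le makes E a vector lattice, and the norm is a lattice norm;
   completeness is built into E : completeNormedModType R. *)
Definition banach_lattice_order : Prop :=
  [/\ (forall x, le x x),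
      (forall x y, le x y -> le y x -> x = y),
      (forall x y z, le x y -> le y z -> le x z),
      (forall x y, exists s, is_sup2 x y s) &
      (forall x y, exists s, is_inf2 x y s)] /\
  [/\ (forall x y z, le x y -> le (x + z) (y + z)),
      (forall (a : R) x, 0 <= a -> le 0 x -> le 0 (a *: x)) &
      (forall x y ax ay, is_sup2 x (- x) ax -> is_sup2 y (- y) ay ->
                         le ax ay -> `|x| <= `|y|)].

(* order continuous norm: whenever a downward directed set A has infimum 0,
   i.e. the net A decreases to 0, its norms tend to 0 (equivalently, since
   the norm is monotone on the decreasing net, inf_{a in A} ||a|| = 0). *)
Definition order_continuous_norm : Prop :=
  forall A : set E,
    A !=set0 ->
    (forall a b, A a -> A b -> exists2 c, A c & le c a /\ le c b) ->
    (forall a, A a -> le 0 a) ->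
    (forall z, (forall a, A a -> le z a) -> le z 0) ->
    forall e : R, 0 < e -> exists2 a, A a & `|a| < e.

Definition order_projection (pi : E -> E) : Prop :=
  [/\ (forall (a : R) x y, pi (a *: x + y) = a *: pi x + pi y),
      (forall x, pi (pi x) = pi x) &
      (forall x, le 0 x -> le 0 (pi x) /\ le (pi x) x)].

Definition proj0 : E -> E := fun _ => 0.
Definition proj1 : E -> E := id.
Definition proj_meet (p q : E -> E) : E -> E := fun x => p (q x).
Definition proj_compl (p : E -> E) : E -> E := fun x => x - p x.
Definition proj_join (p q : E -> E) : E -> E := fun x => p x + q x - p (q x).

Definition boolean_subalgebra (B : set (E -> E)) : Prop :=
  [/\ (forall p, B p -> order_projection p),
      B proj0 & B proj1] /\
  [/\
      (forall p q, B p -> B q -> B (proj_meet p q)),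
      (forall p q, B p -> B q -> B (proj_join p q)) &
      (forall p, B p -> B (proj_compl p))].

Definition proj_le (p q : E -> E) : Prop := proj_meet p q = p.

Definition Sc (B : set (E -> E)) (p : E -> E) : set (E -> E) :=
  [set q | B q /\ proj_le p q].

(* S : B -> B (only the values on B matter) *)
Definition maps_into (B : set (E -> E)) (S : (E -> E) -> (E -> E)) : Prop :=
  forall p, B p -> B (S p).

Definition sectionally_open (B : set (E -> E)) (S : (E -> E) -> (E -> E)) :=
  forall p, B p -> S @` Sc B p = Sc B (S p).

End BanachLattice.

Inductive natinf := Fin of nat | Inf.

Definition forward_filtration {R : realType} {E : completeNormedModType R}
  (le : E -> E -> Prop) (B : set (E -> E)) (xi : natinf -> (E -> E)) : Prop :=
  [/\ (forall i, B (xi i)),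
      (forall n : nat, proj_le (xi (Fin n)) (xi (Fin n.+1))),
      xi (Fin 0) = proj0 & xi Inf = proj1].

(* A sectionally open S is monotone, since S maps Sc(pi) onto Sc(S pi); and it fixes 1,
   because 1 lies in Sc(S 1) = S(Sc 1) while Sc 1 = {1}.  Hence S carries filtrations to
   filtrations, and composites of sectionally open maps are again sectionally open. *)
From mathcomp Require Import all_boot all_order all_algebra.
From mathcomp Require Import all_classical all_reals all_analysis.
Set Implicit Arguments. Unset Strict Implicit. Unset Printing Implicit Defensive.
Import numFieldNormedType.Exports.
Local Open Scope classical_set_scope.
Local Open Scope ring_scope.

Section SectionallyOpen.
Context {R : realType} {E : completeNormedModType R}.
Implicit Types (B : set (E -> E)) (p q : E -> E) (S T : (E -> E) -> (E -> E)).

Lemma proj_le1 p : proj_le p proj1.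
Proof. by []. Qed.

Lemma proj1_le q : proj_le proj1 q -> q = proj1.
Proof. by []. Qed.

Lemma sectionally_open_le B S p q : sectionally_open B S ->
  B p -> B q -> proj_le p q -> proj_le (S p) (S q).
Proof.
move=> hS Bp Bq pq.
have : Sc B (S p) (S q) by rewrite -hS //; exists q.
by case.
Qed.

Lemma sectionally_open_proj1 B S : maps_into B S -> sectionally_open B S ->
  B proj1 -> S proj1 = proj1.
Proof.
move=> hSB hS B1.
have : Sc B (S proj1) proj1 by split; [|exact: proj_le1].
by rewrite -hS // => -[q [_ /proj1_le ->]].
Qed.

Lemma forward_filtration_sectionally_open (le : E -> E -> Prop) B S
    (xi : natinf -> (E -> E)) :
  maps_into B S -> sectionally_open B S -> S proj0 = proj0 ->
  forward_filtration le B xi -> forward_filtration le B (fun i => S (xi i)).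
Proof.
move=> hSB hS hS0 [Bxi xi_le xi0 xiInf]; split=> [i|n||].
- exact: hSB.
- exact: (sectionally_open_le hS (Bxi _) (Bxi _) (xi_le n)).
- by rewrite xi0.
- by rewrite xiInf (sectionally_open_proj1 hSB hS) // -xiInf.
Qed.

Lemma maps_into_comp B S T : maps_into B S -> maps_into B T ->
  maps_into B (fun p => T (S p)).
Proof. by move=> hSB hTB p /hSB /hTB. Qed.

Lemma sectionally_open_comp B S T : maps_into B S ->
  sectionally_open B S -> sectionally_open B T ->
  sectionally_open B (fun p => T (S p)).
Proof.
move=> hSB hS hT p Bp.
by rewrite -(hT _ (hSB _ Bp)) -(hS _ Bp) -image_comp.
Qed.

End SectionallyOpen.

Theorem proposition3p18 (R : realType) (E : completeNormedModType R)
  (le : E -> E -> Prop)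
  (hBL : banach_lattice_order le) (hOC : order_continuous_norm le)
  (B : set (E -> E)) (hB : boolean_subalgebra le B)
  (S : (E -> E) -> (E -> E)) (hSB : maps_into B S)
  (hS : sectionally_open B S) (hS0 : S proj0 = proj0) :
  (forall xi : natinf -> (E -> E), forward_filtration le B xi ->
     forward_filtration le B (fun i => S (xi i))) /\
  (forall T : (E -> E) -> (E -> E), maps_into B T ->
     sectionally_open B T -> T proj0 = proj0 ->
     [/\ maps_into B (fun p => T (S p)),
         sectionally_open B (fun p => T (S p)) &
         T (S proj0) = proj0]).
Proof.
split=> [xi|T hTB hT hT0]; first exact: forward_filtration_sectionally_open.
split; [exact: maps_into_comp | exact: sectionally_open_comp | by rewrite hS0].
Qed.
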